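(* For every integer $k\ge 3$, $M_k(3)\ge \frac{3}{4}\,2^k+2$.
   Context: All graphs are finite and simple. A path $v_1,\ldots,v_r$ in a graph $G$ is degree-monotone if $\deg_G(v_1)\le\cdots\le\deg_G(v_r)$; its order is $r$. Let $mp(G)$ be the maximum order of a degree-monotone path in $G$. For a $k$-edge-coloring of $K_n$ with colors $1,\ldots,k$, let $G_j$ be the spanning subgraph consisting of the edges colored $j$ (degrees taken in $G_j$). $M_k(m)$ is the minimum integer $M$ such that for every $n\ge M$ and every $k$-edge-coloring of $K_n$ there is some $j$ with $mp(G_j)\ge m$. *)

From mathcomp Require Import all_boot.
Set Implicit Arguments. Unset Strict Implicit. Unset Printing Implicit Defensive.

(* A simple graph on a finite vertex type T is given by an adjacency relation e
   (assumed symmetric and irreflexive where relevant). *)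

Definition deg (T : finType) (e : rel T) (x : T) : nat := #|[set y | e x y]|.

Definition dm_path (T : finType) (e : rel T) (s : seq T) : bool :=
  [&& uniq s, sorted e s & sorted (fun x y => deg e x <= deg e y) s].

(* mp(G) >= m  : there is a degree-monotone path of order at least m
   (mp is the maximum order of such a path). *)
Definition mp_ge (T : finType) (e : rel T) (m : nat) : Prop :=
  exists s : seq T, dm_path e s /\ m <= size s.

(* A k-edge-colouring of K_n: a symmetric map c : 'I_n -> 'I_n -> 'I_k
   (values on the diagonal are irrelevant).  Colour class j: *)
Definition colour_graph (n k : nat) (c : 'I_n -> 'I_n -> 'I_k) (j : 'I_k)
  : rel 'I_n := fun x y => (x != y) && (c x y == j).

Definition sym_colouring (n k : nat) (c : 'I_n -> 'I_n -> 'I_k) : Prop :=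
  forall x y, c x y = c y x.

(* M satisfies the defining property of M_k(m): for every n >= M and every
   k-edge-colouring of K_n, some colour class G_j has mp(G_j) >= m.
   M_k(m) is the least such M. *)
Definition Mk_good (k m M : nat) : Prop :=
  forall n, M <= n -> forall c : 'I_n -> 'I_n -> 'I_k, sym_colouring c ->
    exists j : 'I_k, mp_ge (colour_graph c j) m.

(* Doubling: if K_x and K_y with x <> y are coloured so that no colour class
   has a degree-monotone path of order 3, colour every edge between them with
   a new colour.  The new colour class is K_{x,y}, where a path of order 3 has
   both ends of one degree and its middle of the other, so it is not monotone;
   the old colour classes keep their degrees.  Starting from explicit
   3-colourings of K_n for n <= 7, and since 2 (3 * 2^m + 1) - 1 =
   3 * 2^(m+1) + 1, this colours K_n with k colours for every
   n <= 3 * 2^(k-2) + 1.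
   Colourings are handled as functions g : nat -> nat -> nat restricted to the
   vertices below n, and transferred to 'I_n only at the end. *)

From mathcomp Require Import all_boot.
From mathcomp Require Import zify.

Set Implicit Arguments.
Unset Strict Implicit.
Unset Printing Implicit Defensive.

Definition colour_deg (n : nat) (g : nat -> nat -> nat) (j v : nat) : nat :=
  count (fun w => (w != v) && (g v w == j)) (iota 0 n).

Definition no_dm_path3 (n : nat) (g : nat -> nat -> nat) : Prop :=
  forall a b d, a < n -> b < n -> d < n -> a != b -> b != d -> a != d ->
    g a b = g b d ->
    colour_deg n g (g a b) a <= colour_deg n g (g a b) b ->
    colour_deg n g (g a b) b <= colour_deg n g (g a b) d -> False.

Definition colours_lt (n : nat) (g : nat -> nat -> nat) (K : nat) : Prop :=
  forall i j, i < n -> j < n -> g i j < K.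

Definition symmetric_on (n : nat) (g : nat -> nat -> nat) : Prop :=
  forall i j, i < n -> j < n -> g i j = g j i.

Definition dm3_free_colouring (n K : nat) (g : nat -> nat -> nat) : Prop :=
  [/\ no_dm_path3 n g, colours_lt n g K & symmetric_on n g].

Lemma colour_deg_out_of_range n g K v :
  colours_lt n g K -> v < n -> colour_deg n g K v = 0.
Proof.
move=> gK vn; apply/eqP; rewrite -leqn0 leqNgt -has_count; apply/hasPn => w.
rewrite mem_iota add0n => /andP [_ wn]; apply/negP => /andP [_ /eqP gvw].
by have := gK _ _ vn wn; rewrite gvw ltnn.
Qed.

Lemma count_const (b : bool) (s : seq nat) : count (fun=> b) s = b * size s.
Proof. by case: b; rewrite ?count_predT ?count_pred0 ?mul1n. Qed.

Definition small_tables : seq (seq (seq nat)) := [:: [:: ];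
 [:: [:: 0]];
 [:: [:: 0; 0]; [:: 0; 0]];
 [:: [:: 0; 2; 0]; [:: 2; 0; 1]; [:: 0; 1; 0]];
 [:: [:: 0; 0; 0; 2]; [:: 0; 0; 1; 2]; [:: 0; 1; 0; 1]; [:: 2; 2; 1; 0]];
 [:: [:: 0; 0; 0; 2; 0]; [:: 0; 0; 1; 0; 2]; [:: 0; 1; 0; 0; 1];
     [:: 2; 0; 0; 0; 0]; [:: 0; 2; 1; 0; 0]];
 [:: [:: 0; 1; 2; 2; 2; 0]; [:: 1; 0; 2; 0; 2; 2]; [:: 2; 2; 0; 0; 1; 0];
     [:: 2; 0; 0; 0; 0; 1]; [:: 2; 2; 1; 0; 0; 0]; [:: 0; 2; 0; 1; 0; 0]];
 [:: [:: 0; 1; 2; 0; 2; 1; 2]; [:: 1; 0; 1; 1; 0; 2; 0];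
     [:: 2; 1; 0; 2; 0; 1; 0]; [:: 0; 1; 2; 0; 2; 1; 2];
     [:: 2; 0; 0; 2; 0; 0; 1]; [:: 1; 2; 1; 1; 0; 0; 0];
     [:: 2; 0; 0; 2; 1; 0; 0]]].

Definition small_colouring (n : nat) (i j : nat) : nat :=
  nth 0 (nth [::] (nth [::] small_tables n) i) j.

Definition dm3_free_colouringb (n K : nat) (g : nat -> nat -> nat) : bool :=
  let range := iota 0 n in
  [&& all (fun a => all (fun b => all (fun d =>
        ~~ [&& a != b, b != d, a != d, g a b == g b d,
               colour_deg n g (g a b) a <= colour_deg n g (g a b) b &
               colour_deg n g (g a b) b <= colour_deg n g (g a b) d])
        range) range) range,
      all (fun i => all (fun j => g i j < K) range) range &
      all (fun i => all (fun j => g i j == g j i) range) range].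

Lemma dm3_free_colouringP n K g :
  dm3_free_colouringb n K g -> dm3_free_colouring n K g.
Proof.
have inI i : i < n -> i \in iota 0 n by rewrite mem_iota add0n.
case/and3P=> /allP free /allP bound /allP sym; split.
- move=> a b d an bn dn ab bd ad e l1 l2.
  move: (free a (inI a an)) => /allP /(_ b (inI b bn)) /allP /(_ d (inI d dn)).
  by rewrite ab bd ad l1 l2 e eqxx.
- move=> i j i_n j_n.
  by move: (bound i (inI i i_n)) => /allP /(_ j (inI j j_n)).
- move=> i j i_n j_n.
  by move: (sym i (inI i i_n)) => /allP /(_ j (inI j j_n)) /eqP.
Qed.

Lemma small_colouring_dm3_free n :
  n <= 7 -> dm3_free_colouring n 3 (small_colouring n).
Proof.
move=> n7; apply: dm3_free_colouringP.
by do 8! (case: n n7 => [|n] n7; first by vm_compute).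
Qed.

Definition join_colouring (x : nat) (g1 g2 : nat -> nat -> nat) (nc i j : nat)
  : nat :=
  if (i < x) && (j < x) then g1 i j
  else if (x <= i) && (x <= j) then g2 (i - x) (j - x) else nc.

Section Join.
Variables (x y nc : nat) (g1 g2 : nat -> nat -> nat).
Hypotheses (g1_lt : colours_lt x g1 nc) (g2_lt : colours_lt y g2 nc).
Let h := join_colouring x g1 g2 nc.

Lemma join_colour_left i j : i < x -> j < x -> h i j = g1 i j.
Proof. by move=> ix jx; rewrite /h /join_colouring ix jx. Qed.

Lemma join_colour_right i j : x <= i -> x <= j -> h i j = g2 (i - x) (j - x).
Proof. by move=> xi xj; rewrite /h /join_colouring xi xj ltnNge xi. Qed.

Lemma join_colour_cross i j : (i < x) != (j < x) -> h i j = nc.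
Proof.
rewrite /h /join_colouring.
by case: (ltnP i x); case: (ltnP j x); rewrite ?andbF.
Qed.

Lemma join_colour_eq_new i j : i < x + y -> j < x + y ->
  (h i j == nc) = ((i < x) != (j < x)).
Proof.
move=> ixy jxy; rewrite /h /join_colouring.
case: (ltnP i x) => [ix | xi]; case: (ltnP j x) => [jx | xj] /=.
- by rewrite ltn_eqF ?g1_lt.
- by rewrite eqxx.
- by rewrite eqxx.
- by apply: ltn_eqF; apply: g2_lt; lia.
Qed.

Lemma colour_deg_join_left j v : v < x ->
  colour_deg (x + y) h j v = colour_deg x g1 j v + (nc == j) * y.
Proof.
move=> vx; rewrite /colour_deg iotaD count_cat add0n; congr (_ + _).
  apply: eq_in_count => w; rewrite mem_iota add0n => /andP [_ wx].
  by rewrite join_colour_left.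
rewrite -[in RHS](size_iota x y) -count_const; apply: eq_in_count => w.
rewrite mem_iota => /andP [xw _].
rewrite join_colour_cross ?vx ?ltnNge ?xw //.
by rewrite (_ : w != v) //; apply/eqP; lia.
Qed.

Lemma colour_deg_join_right j v : x <= v ->
  colour_deg (x + y) h j v = (nc == j) * x + colour_deg y g2 j (v - x).
Proof.
move=> xv; rewrite /colour_deg iotaD count_cat add0n; congr (_ + _).
  rewrite -[in RHS](size_iota 0 x) -count_const; apply: eq_in_count => w.
  rewrite mem_iota add0n => /andP [_ wx].
  rewrite join_colour_cross ?wx ?ltnNge ?xv //.
  by rewrite (_ : w != v) //; apply/eqP; lia.
rewrite -{1}(addn0 x) iotaDl count_map; apply: eq_in_count => w _ /=.
rewrite join_colour_right ?leq_addr // addKn.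
rewrite (_ : (x + w != v) = (w != v - x)) //.
by apply/idP/idP => /eqP ?; apply/eqP; lia.
Qed.

Lemma colour_deg_join_new v : v < x + y ->
  colour_deg (x + y) h nc v = if v < x then y else x.
Proof.
move=> vxy; case: ltnP => [vx | xv].
  by rewrite colour_deg_join_left // colour_deg_out_of_range // eqxx mul1n.
rewrite colour_deg_join_right // colour_deg_out_of_range ?eqxx ?mul1n ?addn0 //.
lia.
Qed.

Lemma join_no_dm_path3 : no_dm_path3 x g1 -> no_dm_path3 y g2 ->
  (x = y -> x = 0) -> no_dm_path3 (x + y) h.
Proof.
move=> free1 free2 xy a b d a_n b_n d_n ab bd ad e l1 l2.
have side_ab := join_colour_eq_new a_n b_n.
have side_bd := join_colour_eq_new b_n d_n.
case: (eqVneq (h a b) nc) => hab.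
  (* both edges cross between the blocks, so [a] and [d] lie in the same
     block and have the same degree, which forces x = y *)
  rewrite hab !colour_deg_join_new // in l1 l2.
  move: l1 l2 side_ab side_bd xy; rewrite -e hab eqxx.
  by case: (ltnP a x); case: (ltnP b x); case: (ltnP d x) => //=; lia.
move: side_ab side_bd; rewrite -e (negbTE hab) => /esym/negbFE/eqP side_ab.
move=> /esym/negbFE/eqP side_bd.
case: (ltnP a x) => [ax | xa].
  have bx : b < x by rewrite -side_ab.
  have dx : d < x by rewrite -side_bd -side_ab.
  rewrite (join_colour_left ax bx) (join_colour_left bx dx) in e l1 l2.
  rewrite !colour_deg_join_left // in l1 l2.
  rewrite (_ : (nc == g1 a b) = false) ?addn0 in l1 l2.
    exact: (free1 a b d).
  by apply: gtn_eqF; apply: g1_lt.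
have xb : x <= b by rewrite leqNgt -side_ab -leqNgt.
have xd : x <= d by rewrite leqNgt -side_bd -side_ab -leqNgt.
rewrite (join_colour_right xa xb) (join_colour_right xb xd) in e l1 l2.
rewrite !colour_deg_join_right // in l1 l2.
rewrite (_ : (nc == g2 (a - x) (b - x)) = false) ?add0n in l1 l2.
  by apply: (free2 (a - x) (b - x) (d - x)) l1 l2; try (apply/eqP; lia); lia.
by apply: gtn_eqF; apply: g2_lt; lia.
Qed.

Lemma join_colours_lt : colours_lt (x + y) h nc.+1.
Proof.
move=> i j ixy jxy; rewrite /h /join_colouring.
case: ifP => [/andP [ix jx] | _]; first by rewrite ltnS ltnW ?g1_lt.
by case: ifP => [/andP [xi xj] | _] //; rewrite ltnS ltnW // g2_lt //; lia.
Qed.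

Lemma join_symmetric : symmetric_on x g1 -> symmetric_on y g2 ->
  symmetric_on (x + y) h.
Proof.
move=> sym1 sym2 i j ixy jxy; rewrite /h /join_colouring andbC.
case: ifP => [/andP [jx ix] | _]; first exact: sym1.
by rewrite andbC; case: ifP => [/andP [xi xj] | _] //; apply: sym2; lia.
Qed.

End Join.

Lemma join_dm3_free x y nc g1 g2 :
  dm3_free_colouring x nc g1 -> dm3_free_colouring y nc g2 ->
  (x = y -> x = 0) ->
  dm3_free_colouring (x + y) nc.+1 (join_colouring x g1 g2 nc).
Proof.
move=> [free1 lt1 sym1] [free2 lt2 sym2] xy; split.
- exact: join_no_dm_path3.
- exact: join_colours_lt.
- exact: join_symmetric.
Qed.

Definition max_order (m : nat) : nat := 3 * 2 ^ m.+1 + 1.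

Fixpoint rec_colouring (m n : nat) : nat -> nat -> nat :=
  if m is m'.+1 then
    let x := minn n (max_order m') in
    join_colouring x (rec_colouring m' x) (rec_colouring m' (n - x)) m'.+3
  else small_colouring n.

Lemma rec_colouring_dm3_free m n :
  n <= max_order m -> dm3_free_colouring n m.+3 (rec_colouring m n).
Proof.
elim: m n => [|m IH] n n_le; first exact: small_colouring_dm3_free.
rewrite /=; set x := minn n (max_order m).
have n_split : n = x + (n - x) by rewrite /x; lia.
rewrite [X in dm3_free_colouring X]n_split.
have max_orderS : max_order m.+1 = (max_order m).*2.-1.
  by rewrite /max_order expnS; lia.
by apply: join_dm3_free; try apply: IH; rewrite /x; move: n_le;
  rewrite max_orderS; lia.
Qed.

Lemma card_set_val n (P : pred nat) :
  #|[set y : 'I_n | P (val y)]| = count P (iota 0 n).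
Proof.
rewrite -val_enum_ord count_map cardsE cardE size_filter /enum_mem.
by rewrite count_filter; apply: eq_count => y /=; rewrite !inE andbT.
Qed.

Lemma deg_colour_graph n k g (c : 'I_n -> 'I_n -> 'I_k) :
  (forall u w, val (c u w) = g (val u) (val w)) -> forall (j : 'I_k) (v : 'I_n),
  deg (colour_graph c j) v = colour_deg n g (val j) (val v).
Proof.
move=> cg j v; rewrite /deg /colour_deg -card_set_val; apply: eq_card => w.
rewrite !inE /colour_graph -(inj_eq val_inj (c v w)) cg eq_sym.
by rewrite (inj_eq val_inj).
Qed.

Lemma dm3_free_colouring_lt_Mk k n g M :
  dm3_free_colouring n k.+1 g -> Mk_good k.+1 3 M -> n < M.
Proof.
move=> [free g_lt g_sym] good; rewrite ltnNge; apply/negP => Mn.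
pose c (i j : 'I_n) : 'I_k.+1 := inord (g i j).
have cg u w : val (c u w) = g (val u) (val w).
  by apply: inordK; apply: g_lt.
have c_sym : sym_colouring c by move=> u w; rewrite /c g_sym.
have [j [[|a [|b [|d s]]] [/and3P [s_uniq s_path s_mono] s_size]]] :=
  good n Mn c c_sym => //.
move: s_uniq s_path s_mono => /=; rewrite !inE !negb_or.
move=> /andP [/and3P [ab ad _] /andP [/andP [bd _] _]].
move=> /and3P [/andP [_ /eqP cab] /andP [_ /eqP cbd] _] /and3P [l1 l2 _].
rewrite !(deg_colour_graph cg) in l1 l2.
have gab : g a b = j by rewrite -cg cab.
have gbd : g b d = j by rewrite -cg cbd.
by apply: (free a b d); rewrite ?gab ?gbd.
Qed.

Theorem lemma3p7 (k : nat) : 3 <= k ->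
  forall M : nat, Mk_good k 3 M -> 3 * 2 ^ k + 8 <= 4 * M.
Proof.
move=> k3 M good; pose m := k - 3.
have k_eq : k = m.+3 by rewrite /m; lia.
rewrite k_eq in good.
have := dm3_free_colouring_lt_Mk (rec_colouring_dm3_free (leqnn _)) good.
rewrite /max_order k_eq !expnS; lia.
Qed.
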